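(* Let $\mathcal L$ be an arbitrary finite lattice. Then the simplicial complex $\mathcal J(\mathcal L)$ collapses onto its subcomplex $\Delta(\bar{\mathcal L})$.
   Context: For a finite lattice $\mathcal L$ with minimum $\hat0$ and maximum $\hat1$, $\bar{\mathcal L}=\mathcal L\setminus\{\hat0,\hat1\}$. $\mathcal J(\mathcal L)$ is the simplicial complex with vertex set $\bar{\mathcal L}$ whose simplices are the nonempty subsets $S\subseteq\bar{\mathcal L}$ with $\bigwedge S\neq\hat0$. $\Delta(\bar{\mathcal L})$ is the order complex of $\bar{\mathcal L}$ (simplices = nonempty chains), which is a subcomplex of $\mathcal J(\mathcal L)$. *)

From HB Require Import structures.
From mathcomp Require Import all_boot all_order.
From Stdlib Require Import Relations.Relation_Operators.
Set Implicit Arguments. Unset Strict Implicit. Unset Printing Implicit Defensive.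
Import Order.Theory.
Local Open Scope order_scope.

(* A finite lattice L (with minimum \bot = 0^ and maximum \top = 1^) is a
   T : finTBLatticeType d.  Simplicial complexes are represented by their
   set of faces (nonempty finite vertex sets). *)

Section Defs.
Context {d : Order.disp_t} {T : finTBLatticeType d}.

Definition proper_part : {set T} :=
  [set x : T | (x != \bot) && (x != \top)].

Definition J_complex : {set {set T}} :=
  [set S : {set T} | [&& S != set0, S \subset proper_part
                       & \meet_(x in S) x != \bot]].

Definition is_chain (S : {set T}) : bool :=
  [forall x in S, forall y in S, (x <= y) || (y <= x)].

Definition order_complex : {set {set T}} :=
  [set S : {set T} | [&& S != set0, S \subset proper_part & is_chain S]].
End Defs.

Section Collapse.
Context {V : finType}.

Definition elementary_collapse (K K' : {set {set V}}) : Prop :=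
  exists sigma tau : {set V},
    [/\ sigma \in K, tau \in K, sigma \proper tau,
        (forall rho, rho \in K -> sigma \proper rho -> rho = tau)
      & K' = (K :\ sigma) :\ tau].

Definition collapses (K K' : {set {set V}}) : Prop :=
  clos_refl_trans _ elementary_collapse K K'.
End Collapse.

From mathcomp Require Import all_boot all_order.
From mathcomp Require Import zify.
From Stdlib Require Import Relations.Relation_Operators.
Set Implicit Arguments. Unset Strict Implicit. Unset Printing Implicit Defensive.

(* From a face S of J(L), repeatedly remove the least element of S as long as it
   lies strictly below the meet of the remaining ones; the number of elements so
   removed is the depth of S.  Nothing is left exactly when S is a chain.
   Otherwise the meet of what is left, the pivot of S, is a proper element of L,
   and adding it to or removing it from S does not change the pivot; toggling the
   pivot thus pairs off all faces of J(L) that are not chains.  This matching is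
   acyclic: if S lies in the partner of another lower face S' of the same size,
   then S' has smaller depth.  Removing the pairs by decreasing size and, at equal
   size, by increasing depth, each lower face is free when its turn comes. *)

Lemma setD1U1 (V : finType) (X : {set V}) w m :
  w != m -> (w |: X) :\ m = w |: (X :\ m).
Proof.
by move=> wm; apply/setP => z; rewrite !inE; case: (eqVneq z w) => [->|]; rewrite ?wm.
Qed.

Lemma setD1C (V : finType) (X : {set V}) a b : X :\ a :\ b = X :\ b :\ a.
Proof. by rewrite !setDDl setUC. Qed.

Lemma setU1_neq0 (V : finType) (X : {set V}) x : x |: X != set0.
Proof. by apply/set0Pn; exists x; rewrite setU11. Qed.

Lemma proper_card_setU1 (V : finType) (A B : {set V}) :
  A \proper B -> #|B| = #|A|.+1 -> exists2 w, w \notin A & B = w |: A.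
Proof.
case/properP=> AB [w wB wA] cB; exists w => //; apply/esym/eqP.
by rewrite eqEcard subUset sub1set wB AB cardsU1 wA cB add1n ltnSn.
Qed.

Section MatchingCollapse.
Variables (V : finType) (K0 P : {set {set V}}).
Variables (up : {set V} -> {set V}) (mu : {set V} -> nat).
Implicit Types (s rho : {set V}) (L : {set {set V}}).
Hypotheses (up_proper : {in P, forall s, s \proper up s})
  (up_notin : {in P, forall s, up s \notin P})
  (up_inj : {in P &, injective up})
  (P_notin_K0 : {in P & K0, forall s rho, ~~ (s \subset rho)})
  (mu_proper : {in P &, forall s s', s \proper s' -> mu s < mu s'})
  (mu_up : {in P &, forall s s', s \proper up s' -> s != s' -> mu s < mu s'}).

Definition matched_complex L : {set {set V}} := K0 :|: L :|: up @: L.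

Lemma P_up_notin_K0 s : s \in P -> (s \notin K0) && (up s \notin K0).
Proof.
by move=> sP; apply/andP; split; apply/negP => /(P_notin_K0 sP);
  rewrite ?subxx ?proper_sub ?up_proper.
Qed.

Lemma elementary_collapse_argmax L s : L \subset P -> s \in L ->
    (forall s', s' \in L -> mu s' <= mu s) ->
  elementary_collapse (matched_complex L) (matched_complex (L :\ s)).
Proof.
move=> /subsetP LP sL smax; have sP := LP s sL.
have /andP[sK0 upK0] := P_up_notin_K0 sP.
exists s, (up s); split; rewrite ?inE ?imset_f ?sL ?orbT ?up_proper //.
- move=> rho; rewrite !inE => /orP[/orP[rK0|rL]|/imsetP[s' s'L ->]] srho.
  + by have := P_notin_K0 sP rK0; rewrite proper_sub.
  + by have := leq_trans (mu_proper sP (LP _ rL) srho) (smax _ rL); rewrite ltnn.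
  + have [-> //|ss'] := eqVneq s s'.
    have := leq_trans (mu_up sP (LP _ s'L) srho ss') (smax _ s'L).
    by rewrite ltnn.
- apply/setP => x; rewrite !in_setD1 !in_setU.
  have [-> {x}|xs] := eqVneq x s.
    rewrite (negbTE sK0) in_setD1 eqxx /= andbF; apply/imsetP.
    by case=> s' /setD1P[_ s'L] e; have := up_notin (LP _ s'L); rewrite -e sP.
  have [->|xu] := eqVneq x (up s).
    have upL : up s \notin L := contra (LP _) (up_notin sP).
    rewrite (negbTE upK0) in_setD1 (negbTE upL) andbF /=; apply/imsetP.
    case=> s' /setD1P[s's s'L] e.
    by move: s's; rewrite (up_inj sP (LP _ s'L) e) eqxx.
  rewrite in_setD1 xs /=; congr (_ || _); apply/imsetP/imsetP => -[s' s'L e].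
    by case/setD1P: s'L => _ s'L; exists s'.
  by exists s' => //; apply/setD1P; split => //; apply: contraNneq xu => es; rewrite e es.
Qed.

Lemma matching_collapses L : L \subset P -> collapses (matched_complex L) K0.
Proof.
have [n] := ubnP #|L|; elim: n L => // n IH L hL LP.
have [->|[s0 s0L]] := set_0Vmem L.
  by rewrite /matched_complex imset0 !setU0; apply: rt_refl.
case: (arg_maxnP mu s0L) => s sL smax.
apply: rt_trans (rt_step _ _ _ _ (elementary_collapse_argmax LP sL smax)) _.
apply: IH; last exact: subset_trans (subD1set _ _) LP.
by move: hL; rewrite (cardsD1 s L) (sL : s \in L).
Qed.

End MatchingCollapse.

Import Order.Theory.
Local Open Scope order_scope.

Section Peeling.
Context {d : Order.disp_t} {T : finTBLatticeType d}.
Implicit Types (X Y : {set T}) (u v w x : T).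

Definition meetS X : T := \meet_(x in X) x.

Lemma meetS_le x X : x \in X -> meetS X <= x.
Proof. exact: meets_inf. Qed.

Lemma meetS_ge u X : {in X, forall x, u <= x} -> u <= meetS X.
Proof. by move=> h; apply/meetsP. Qed.

Lemma meetS0 : meetS set0 = \top.
Proof. by rewrite /meetS big_set0. Qed.

Lemma meetSU1 w X : meetS (w |: X) = w `&` meetS X.
Proof. by rewrite /meetS meets_setU big_set1. Qed.

Lemma meetS_sub X Y : X \subset Y -> meetS Y <= meetS X.
Proof. exact: le_meets. Qed.

Lemma meetS_setD1 X x : meetS X \in X -> x != meetS X -> meetS (X :\ x) = meetS X.
Proof.
move=> mX xm; apply/le_anti/andP; split; last exact: meetS_sub (subD1set _ _).
by apply: meetS_le; rewrite in_setD1 eq_sym xm.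
Qed.

Definition has_strict_min X := (meetS X \in X) && (meetS X < meetS (X :\ meetS X)).

Lemma strict_min_setD1 X x :
  has_strict_min X -> x != meetS X -> has_strict_min (X :\ x).
Proof.
case/andP=> mX mlt xm; rewrite /has_strict_min meetS_setD1 // in_setD1 eq_sym xm mX.
by rewrite setD1C (lt_le_trans mlt) // meetS_sub ?subD1set.
Qed.

Lemma strict_min_setU1 X w : meetS X \in X -> meetS X <= w -> w != meetS X ->
  has_strict_min (w |: X) = (meetS X < w `&` meetS (X :\ meetS X)).
Proof.
by move=> mX mw wm; rewrite /has_strict_min meetSU1 meet_r // setU1r //= setD1U1 // meetSU1.
Qed.

Lemma card_strict_min X : has_strict_min X -> #|X :\ meetS X|.+1 = #|X|.
Proof. by case/andP=> mX _; rewrite (cardsD1 (meetS X) X) mX. Qed.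

Lemma strict_min_ind (P : {set T} -> Prop) :
    (forall X, ~~ has_strict_min X -> P X) ->
    (forall X, has_strict_min X -> P (X :\ meetS X) -> P X) ->
  forall X, P X.
Proof.
move=> base step X; have [n] := ubnP #|X|; elim: n X => // n IH X hX.
have [hs|hs] := boolP (has_strict_min X); last exact: base.
by apply: step => //; apply: IH; rewrite -ltnS card_strict_min.
Qed.

Fixpoint peel n X : nat * {set T} :=
  if n is n.+1 then
    if has_strict_min X then let p := peel n (X :\ meetS X) in (p.1.+1, p.2)
    else (0, X)
  else (0, X).

(* [#|X|] is enough fuel: each step removes an element. *)
Definition peeled X := peel #|X| X.
Definition depth X := (peeled X).1.
Definition core X := (peeled X).2.
Definition pivot X : option T := if core X == set0 then None else Some (meetS (core X)).

Lemma peeledE X : peeled X =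
  if has_strict_min X then ((depth (X :\ meetS X)).+1, core (X :\ meetS X))
  else (0, X).
Proof.
rewrite /peeled; have [hs|hs] := boolP (has_strict_min X).
  by rewrite -(card_strict_min hs) /= hs.
by case: #|X| => //= n; rewrite (negbTE hs).
Qed.

Lemma depthE X :
  depth X = if has_strict_min X then (depth (X :\ meetS X)).+1 else 0.
Proof. by rewrite {1}/depth peeledE; case: ifP. Qed.

Lemma pivotE X : pivot X =
  if has_strict_min X then pivot (X :\ meetS X)
  else if X == set0 then None else Some (meetS X).
Proof. by rewrite {1}/pivot /core peeledE; case: (has_strict_min X). Qed.

Lemma pivot_nonstrict X :
  ~~ has_strict_min X -> X != set0 -> pivot X = Some (meetS X).
Proof. by move=> hs X0; rewrite pivotE (negbTE hs) (negbTE X0). Qed.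

Lemma pivot_ge X u : pivot X = Some u -> meetS X <= u.
Proof.
elim/strict_min_ind: X u => X hs.
  by rewrite pivotE (negbTE hs); case: eqP => // _ u [<-].
move=> IH u; rewrite pivotE hs => /IH; apply: le_trans.
exact: meetS_sub (subD1set _ _).
Qed.

Lemma pivot_mem X u : pivot X = Some u -> exists2 x, x \in X & u <= x.
Proof.
elim/strict_min_ind: X u => X hs.
  rewrite pivotE (negbTE hs); case: eqP => // /eqP /set0Pn[x xX] u [<-].
  by exists x => //; apply: meetS_le.
move=> IH u; rewrite pivotE hs => /IH[x /setD1P[_ xX] ux].
by exists x.
Qed.

Lemma chainP X :
  reflect {in X &, forall x y, (x <= y) || (y <= x)} (is_chain X).
Proof.
apply: (iffP forall_inP) => H x; last by move=> xX; apply/forall_inP => y; apply: H.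
by move=> y xX yX; apply: (forall_inP (H x xX)).
Qed.

Lemma sub_chain X Y : X \subset Y -> is_chain Y -> is_chain X.
Proof.
by move=> /subsetP XY /chainP ch; apply/chainP => x y xX yX; apply: ch; apply: XY.
Qed.

Lemma chain_meetS_in X : is_chain X -> X != set0 -> meetS X \in X.
Proof.
have [n] := ubnP #|X|; elim: n X => // n IH X hX ch /set0Pn[x xX].
rewrite -(setD1K xX) meetSU1.
have [->|X0] := eqVneq (X :\ x) set0; first by rewrite meetS0 meetx1 setU11.
have mX : meetS (X :\ x) \in X :\ x.
  apply: IH X0; last exact: sub_chain (subD1set _ _) ch.
  by move: hX; rewrite (cardsD1 x X) xX.
case/orP: (chainP _ ch x _ xX (subsetP (subD1set X x) _ mX)) => h.
  by rewrite meet_l // setU11.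
by rewrite meet_r // setU1r.
Qed.

Lemma chain_strict_min X :
  \top \notin X -> is_chain X -> X != set0 -> has_strict_min X.
Proof.
move=> tX ch X0; have mX := chain_meetS_in ch X0; rewrite /has_strict_min mX /=.
have [->|X1] := eqVneq (X :\ meetS X) set0.
  by rewrite meetS0 lt_def lex1 andbT; apply: contraNneq tX => ->.
have /setD1P[mm _] := chain_meetS_in (sub_chain (subD1set _ _) ch) X1.
rewrite lt_def mm; apply: meetS_ge => x /setD1P[_ xX]; exact: meetS_le.
Qed.

Lemma pivot_eq_None X : \top \notin X -> (pivot X == None) = is_chain X.
Proof.
elim/strict_min_ind: X => X hs.
  move=> tX; rewrite pivotE (negbTE hs); have [->|X0] := eqVneq X set0.
    by apply/esym/chainP => x y; rewrite inE.
  by apply/esym/negP => ch; move: hs; rewrite chain_strict_min.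
move=> IH tX; rewrite pivotE hs IH; last by apply: contra tX => /setD1P[].
apply/idP/idP; last exact: sub_chain (subD1set _ _).
case/andP: hs => mX _ ch; apply/chainP => x y xX yX.
have [->|xm] := eqVneq x (meetS X); first by rewrite meetS_le.
have [->|ym] := eqVneq y (meetS X); first by rewrite meetS_le ?orbT.
by apply: (chainP _ ch); apply/setD1P.
Qed.

Lemma pivot_setU1 X v : pivot X = Some v -> v \notin X -> pivot (v |: X) = Some v.
Proof.
elim/strict_min_ind: X v => X hs.
  rewrite pivotE (negbTE hs); case: eqP => // _ v [<-] mX.
  rewrite pivot_nonstrict ?meetSU1 ?meetxx ?setU1_neq0 //.
  by rewrite /has_strict_min meetSU1 meetxx setU1K // ltxx andbF.
move=> IH v; rewrite pivotE hs => pv vX; case/andP: (hs) => mX mlt.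
have le_v := pivot_ge pv; have mv := lt_le_trans mlt le_v.
have vm : v != meetS X by rewrite gt_eqF.
rewrite pivotE strict_min_setU1 ?ltW // meet_r // mlt meetSU1 meet_r ?ltW //.
by rewrite setD1U1 // IH //; apply: contra vX => /setD1P[].
Qed.

Lemma meetS_setD1_nonstrict X :
  meetS X \in X -> ~~ has_strict_min X -> meetS (X :\ meetS X) = meetS X.
Proof.
by move=> mX; rewrite /has_strict_min mX lt_def meetS_sub ?subD1set // andbT negbK => /eqP.
Qed.

Lemma pivot_setD1 X v :
  \top \notin X -> pivot X = Some v -> v \in X -> pivot (X :\ v) = Some v.
Proof.
elim/strict_min_ind: X v => X hs.
  move=> v tX; rewrite pivotE (negbTE hs); case: eqP => // _ [<-] mX.
  have eq_m := meetS_setD1_nonstrict mX hs.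
  rewrite pivot_nonstrict ?eq_m /has_strict_min ?eq_m ?setD11 //.
  by apply: contraNneq tX => X1; move: eq_m; rewrite X1 meetS0 => ->.
move=> IH v tX; rewrite pivotE hs => pv vX; case/andP: (hs) => mX mlt.
have vm : v != meetS X by rewrite gt_eqF // (lt_le_trans mlt) ?pivot_ge.
rewrite pivotE strict_min_setD1 // meetS_setD1 // setD1C IH //.
- by apply: contra tX => /setD1P[].
- by apply/setD1P.
Qed.

Lemma pivot_setU1_not_above X w u : ~~ (meetS X <= w) -> w \notin X ->
  pivot (w |: X) = Some u -> u \in w |: X -> pivot X = Some u.
Proof.
move=> mw wX; have [mY|mY] := boolP (meetS (w |: X) \in w |: X); last first.
  have ns : ~~ has_strict_min (w |: X) by rewrite /has_strict_min (negbTE mY).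
  by rewrite pivot_nonstrict ?setU1_neq0 // => -[<-]; rewrite (negbTE mY).
have wm : meetS (w |: X) = w.
  move: mY; rewrite meetSU1 => /setU1P[//|/meetS_le].
  by move=> h; move: mw; rewrite (le_trans h) ?leIl.
have hs : has_strict_min (w |: X).
  rewrite /has_strict_min mY wm setU1K // lt_def -{2}wm meetSU1 leIr andbT.
  by apply: contraNneq mw => ->.
by rewrite pivotE hs wm setU1K.
Qed.

Lemma exchange_meet_le X v w u :
  pivot X = Some v -> v \notin X -> w \notin X -> w != v ->
  pivot (w |: X) = Some u -> u \in w |: X -> meetS X <= w.
Proof.
move=> pX vX wX wv pY uY; apply/negPn/negP => mw.
move: (pivot_setU1_not_above mw wX pY uY); rewrite pX => -[vu].
by move: uY; rewrite -vu in_setU1 (negbTE vX) orbF eq_sym (negbTE wv).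
Qed.

Lemma depth_exchange X v w u :
  pivot X = Some v -> v \notin X -> w \notin X -> w != v ->
  pivot (w |: X) = Some u -> u \in w |: X -> (depth ((w |: X) :\ u) < depth X)%N.
Proof.
elim/strict_min_ind: X v w u => [X hs|X hs IH] v w u pX vX wX wv pY uY;
  have mw := exchange_meet_le pX vX wX wv pY uY;
  have eY : meetS (w |: X) = meetS X by rewrite meetSU1 meet_r.
  have [x xX _] := pivot_mem pX.
  move: pX; rewrite pivot_nonstrict //; last by apply/set0Pn; exists x.
  case=> vm; have mY : meetS X \notin w |: X.
    by rewrite in_setU1 vm eq_sym (negbTE wv) (negbTE vX).
  have nY : ~~ has_strict_min (w |: X) by rewrite /has_strict_min eY (negbTE mY).
  move: pY uY; rewrite pivot_nonstrict ?setU1_neq0 // eY => -[<-].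
  by rewrite (negbTE mY).
case/andP: (hs) => mX mlt; rewrite pivotE hs in pX.
have wm : w != meetS X by apply: contraNneq wX => ->.
have vX' : v \notin X :\ meetS X by apply: contra vX => /setD1P[].
have wX' : w \notin X :\ meetS X by apply: contra wX => /setD1P[].
rewrite [depth X]depthE hs.
have [b|nb] := boolP (meetS X < w `&` meetS (X :\ meetS X)).
  have hY : has_strict_min (w |: X) by rewrite strict_min_setU1.
  move: pY; rewrite pivotE hY eY setD1U1 // => pY'.
  have um : u != meetS X.
    by rewrite gt_eqF // (lt_le_trans b) // -meetSU1 (pivot_ge pY').
  have uY' : u \in w |: (X :\ meetS X) by rewrite -setD1U1 //; apply/setD1P.
  rewrite depthE strict_min_setD1 ?eY // meetS_setD1 ?eY ?setU1r //.
  by rewrite setD1C setD1U1 // ltnS (IH v w u).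
have nY : ~~ has_strict_min (w |: X) by rewrite strict_min_setU1.
move: pY; rewrite pivot_nonstrict ?setU1_neq0 // eY => -[<-].
have e : meetS (w |: (X :\ meetS X)) = meetS X.
  apply/eqP; move: nb; rewrite lt_def meetSU1 lexI mw meetS_sub ?subD1set //.
  by rewrite !andbT negbK.
by rewrite setD1U1 // depthE /has_strict_min e in_setU1 eq_sym (negbTE wm) setD11.
Qed.

Lemma depth_le_card X : (depth X <= #|X|)%N.
Proof.
elim/strict_min_ind: X => [X hs|X hs IH]; first by rewrite depthE (negbTE hs).
by rewrite depthE hs -card_strict_min.
Qed.

Lemma pivot0 : pivot set0 = None :> option T.
Proof. by rewrite pivotE /has_strict_min in_set0 eqxx. Qed.

End Peeling.


Section LatticeMatching.
Context {d : Order.disp_t} {T : finTBLatticeType d}.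
Local Notation J := (@J_complex d T).
Local Notation D := (@order_complex d T).
Implicit Types (S : {set T}) (v : T).

Definition lower_faces : {set {set T}} :=
  [set S in J | if pivot S is Some v then v \notin S else false].
Definition raise S : {set T} := if pivot S is Some v then v |: S else S.
(* Lexicographic in size and reversed depth, as [depth S <= #|T|]. *)
Definition weight S : nat := #|S| * #|T|.+1 + (#|T| - depth S).

Lemma J_notin_top S : S \in J -> \top \notin S.
Proof.
rewrite inE => /and3P[_ /subsetP sub _]; apply/negP => /sub.
by rewrite inE eqxx andbF.
Qed.

Lemma order_complex_sub_J : D \subset J.
Proof.
apply/subsetP => S; rewrite !inE => /and3P[S0 sub ch]; rewrite S0 sub /=.
by have /(subsetP sub) := chain_meetS_in ch S0; rewrite inE => /andP[].
Qed.

Lemma lower_facesP S :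
  reflect (S \in J /\ exists2 v, pivot S = Some v & v \notin S) (S \in lower_faces).
Proof.
rewrite [S \in lower_faces]inE; case: (pivot S) => [v|]; last first.
  by rewrite andbF; right; case=> _ [].
by apply: (iffP andP) => [[SJ vS]|[SJ [_ [<-]]]]; split => //; exists v.
Qed.

Lemma raise_lower S v : pivot S = Some v -> raise S = v |: S.
Proof. by rewrite /raise => ->. Qed.

Lemma raise_J S : S \in lower_faces -> raise S \in J.
Proof.
case/lower_facesP => SJ [v pS vS]; move: SJ; rewrite (raise_lower pS) !inE.
rewrite -!/(meetS _) => /and3P[S0 sub mS].
have mvS : meetS (v |: S) = meetS S by rewrite meetSU1 meet_r ?pivot_ge.
have vb : v != \bot.
  by apply: contraNneq mS => vb; have := pivot_ge pS; rewrite vb lex0.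
have vt : v != \top.
  have [z zS vz] := pivot_mem pS.
  have := subsetP sub z zS; rewrite inE => /andP[_].
  by apply: contraNneq => zt; rewrite -le1x -zt.
by rewrite setU1_neq0 subUset sub sub1set inE vb vt mvS.
Qed.

Lemma pivot_raise S : S \in lower_faces -> pivot (raise S) = pivot S.
Proof.
by case/lower_facesP => _ [v pS vS]; rewrite (raise_lower pS) (pivot_setU1 pS vS).
Qed.

Lemma raise_proper : {in lower_faces, forall S, S \proper raise S}.
Proof.
move=> S /lower_facesP[_ [v pS vS]]; rewrite (raise_lower pS) properEneq subsetUr.
by rewrite andbT; apply: contraNneq vS => ->; rewrite setU11.
Qed.

Lemma raise_notin_lower : {in lower_faces, forall S, raise S \notin lower_faces}.
Proof.
move=> S SL; apply/lower_facesP => -[_ [v]]; rewrite pivot_raise //.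
by case/lower_facesP: SL => _ [u pS _]; rewrite pS (raise_lower pS) => -[<-]; rewrite setU11.
Qed.

Lemma raise_inj : {in lower_faces &, injective raise}.
Proof.
move=> S S' SL S'L e; have := pivot_raise SL; rewrite e pivot_raise //.
case/lower_facesP: SL e => _ [v pS vS]; case/lower_facesP: S'L => _ [v' pS' vS'].
rewrite (raise_lower pS) (raise_lower pS') pS pS' => e [vv].
by rewrite -(setU1K vS) -(setU1K vS') e vv.
Qed.

Lemma lower_not_sub_chain : {in lower_faces & D, forall S C : {set T}, ~~ (S \subset C)}.
Proof.
move=> S C /lower_facesP[SJ [v pS _]]; rewrite inE => /and3P[_ _ ch].
apply/negP => SC; move: (sub_chain SC ch); rewrite -pivot_eq_None ?J_notin_top //.
by rewrite pS.
Qed.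

Lemma weight_card_lt S S' : (#|S| < #|S'|)%N -> (weight S < weight S')%N.
Proof.
rewrite /weight => lt; have := leq_mul2r #|T|.+1 #|S|.+1 #|S'|; rewrite lt orbT mulSn.
by lia.
Qed.

Lemma weight_depth_lt S S' :
  #|S| = #|S'| -> (depth S' < depth S)%N -> (weight S < weight S')%N.
Proof.
have : (depth S <= #|T|)%N := leq_trans (depth_le_card S) (max_card S).
by rewrite /weight => + ->; lia.
Qed.

Lemma weight_raise : {in lower_faces &, forall S S',
  S \proper raise S' -> S != S' -> (weight S < weight S')%N}.
Proof.
move=> S S' SL S'L; have /lower_facesP[_ [v pS vS]] := SL.
have /lower_facesP[_ [v' pS' vS']] := S'L; rewrite (raise_lower pS') => sub SS'.
have := proper_card sub; rewrite cardsU1 vS' add1n ltnS leq_eqVlt.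
case/orP => [/eqP cS|]; last exact: weight_card_lt.
have cU : #|v' |: S'| = #|S|.+1 by rewrite cardsU1 vS' cS.
have [w wS ew] := proper_card_setU1 sub cU.
have wv : w != v.
  apply: contraNneq SS' => wv; apply/eqP/(raise_inj SL S'L).
  by rewrite (raise_lower pS) (raise_lower pS') ew wv.
apply: weight_depth_lt => //; rewrite -(setU1K vS') ew.
apply: (depth_exchange pS vS wS wv); rewrite -ew ?setU11 //.
exact: pivot_setU1.
Qed.

Lemma J_setD1_pivot S u :
  S \in J -> pivot S = Some u -> u \in S -> S :\ u \in J.
Proof.
move=> SJ pS uS; have pSu := pivot_setD1 (J_notin_top SJ) pS uS.
move: SJ; rewrite !inE -!/(meetS _) => /and3P[_ sub mS].
apply/and3P; split.
- by apply/eqP => e; move: pSu; rewrite e pivot0.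
- exact: subset_trans (subD1set _ _) sub.
- by apply: contraNneq mS => mb; rewrite -lex0 -mb meetS_sub ?subD1set.
Qed.

Lemma J_matched : J = matched_complex D raise lower_faces.
Proof.
apply/setP => S; rewrite !in_setU; apply/idP/idP; last first.
  case/orP=> [/orP[SD|/lower_facesP[]//]|/imsetP[S' S'L ->]]; last exact: raise_J.
  exact: subsetP order_complex_sub_J S SD.
move=> SJ; case pS: (pivot S) => [u|].
  have [uS|uS] := boolP (u \in S).
    apply/orP; right; apply/imsetP; exists (S :\ u).
      apply/lower_facesP; split; first exact: J_setD1_pivot.
      by exists u; rewrite ?setD11 ?pivot_setD1 ?J_notin_top.
    by rewrite (raise_lower (pivot_setD1 (J_notin_top SJ) pS uS)) setD1K.
  by apply/orP; left; apply/orP; right; apply/lower_facesP; split => //; exists u.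
have ch : is_chain S by rewrite -pivot_eq_None ?pS ?J_notin_top.
by move: SJ; rewrite !inE ch andbT => /and3P[-> ->].
Qed.

End LatticeMatching.

Theorem mainTheorem6 (d : Order.disp_t) (T : finTBLatticeType d) :
  collapses (@J_complex d T) (@order_complex d T).
Proof.
rewrite J_matched; apply: (matching_collapses (mu := weight)) => //.
- exact: raise_proper.
- exact: raise_notin_lower.
- exact: raise_inj.
- exact: lower_not_sub_chain.
- by move=> S S' _ _ /proper_card; apply: weight_card_lt.
- exact: weight_raise.
Qed.
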